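(* Let $\boldsymbol{R}=[r_{ij}]\in\mathbb{C}^{N\times N}$ be Hermitian. Define $\delta_1=0$ and $\delta_k=\sum_{i=1}^{k-1}|r_{ki}|$ for $k=2,\ldots,N$; define $a_k=2\delta_k+4\sum_{i=1}^{N-k}\delta_{k+i}$ for $k=1,\ldots,N-1$ and $a_N=2\delta_N$; and let $\overline{\boldsymbol{R}}=\boldsymbol{R}-\mathrm{Diag}(\boldsymbol{R})+\mathrm{diag}(a_1,\ldots,a_N)$. Let $\boldsymbol{g}\in\Omega^N$ be the output of the greedy method: $\boldsymbol{g}(1)=1$ and, for $k=1,\ldots,N-1$, $\boldsymbol{g}(k+1)$ is a maximizer over $x\in\Omega$ of $[\boldsymbol{g}(1),\ldots,\boldsymbol{g}(k),x]^H\boldsymbol{R}_{k+1}[\boldsymbol{g}(1),\ldots,\boldsymbol{g}(k),x]$. If $\mathrm{Tr}(\overline{\boldsymbol{R}})\le\mathrm{Tr}(\boldsymbol{R})$, then \[ \boldsymbol{g}^H\boldsymbol{R}\boldsymbol{g}\ \ge\ \Big(1-\frac{1}{e}\Big)\max_{\boldsymbol{s}\in\Omega^N}\boldsymbol{s}^H\boldsymbol{R}\boldsymbol{s}. \]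
   Context: $\Omega=\{x\in\mathbb{C}:|x|=1\}$. $\boldsymbol{R}_m$ denotes the principal submatrix of $\boldsymbol{R}$ formed by its first $m$ rows and first $m$ columns, and $[c_1,\ldots,c_m]$ denotes the column vector with entries $c_1,\ldots,c_m$. $\mathrm{Diag}(\boldsymbol{R})$ is the diagonal matrix with the diagonal of $\boldsymbol{R}$; $\mathrm{diag}(a_1,\ldots,a_N)$ is the diagonal matrix with entries $a_1,\ldots,a_N$. $\mathrm{Tr}$ denotes the trace. Empty sums are zero. *)

From HB Require Import structures.
From mathcomp Require Import all_boot all_order all_algebra.
From mathcomp Require Import complex.
From mathcomp Require Import reals.
From mathcomp Require Import sequences exp.
Set Implicit Arguments. Unset Strict Implicit. Unset Printing Implicit Defensive.
Import Order.TTheory GRing.Theory Num.Theory.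
Local Open Scope ring_scope.
Local Open Scope complex_scope.

(* Complex numbers are R[i] for R : realType (an rcfType). Indices are 0-based:
   paper index k (1..N) corresponds to i : 'I_N with val i = k-1. *)

Section Defs.
Variable R : realType.
Variable N : nat.
Implicit Types (A : 'M[R[i]]_N) (v : 'I_N -> R[i]).

Definition hermitian_mx A := forall i j : 'I_N, A j i = (A i j)^*.

Definition on_circle (x : R[i]) := `|x| = 1.

Definition quadm (m : nat) A v : R[i] :=
  \sum_(i < N | (i < m)%N) \sum_(j < N | (j < m)%N) (v i)^* * A i j * v j.

Definition quad A v : R[i] := \sum_(i < N) \sum_(j < N) (v i)^* * A i j * v j.

Definition setv v (k : 'I_N) (x : R[i]) : 'I_N -> R[i] :=
  fun i => if i == k then x else v i.

Definition delta A (k : 'I_N) : R[i] := \sum_(i < N | (i < k)%N) `|A k i|.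

(* a_k = 2 delta_k + 4 sum_{j > k} delta_j ; for the last index the sum is empty,
   giving a_N = 2 delta_N *)
Definition acoef A (k : 'I_N) : R[i] :=
  2 * delta A k + 4 * \sum_(j < N | (k < j)%N) delta A j.

Definition Rbar A : 'M[R[i]]_N :=
  \matrix_(i, j) (if i == j then acoef A i else A i j).

Definition greedy_output A v :=
  (forall i : 'I_N, on_circle (v i)) /\
  (forall i : 'I_N, nat_of_ord i = 0%N -> v i = 1) /\
  (forall k : 'I_N, (0 < k)%N -> forall x : R[i], on_circle x ->
      quadm k.+1 A (setv v k x) <= quadm k.+1 A v).

End Defs.

From HB Require Import structures.
From mathcomp Require Import all_boot all_order all_algebra.
From mathcomp Require Import complex.
From mathcomp Require Import reals.
From mathcomp Require Import sequences exp.
From mathcomp Require Import ring lra.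
Import Order.TTheory GRing.Theory Num.Theory.
Local Open Scope ring_scope.
Local Open Scope complex_scope.

(* In the greedy step k, the choices x = 1 and x = -1 are both admissible and
   their values average to the previous partial form plus r_kk; summing over k
   gives g^H R g >= Tr R.  For unimodular s, s^H R s <= Tr R + sum_{i<>j} |r_ij|
   = Tr R + 2 sum_k delta_k, while Tr Rbar >= 6 sum_k delta_k.  So the trace
   hypothesis yields s^H R s <= 4/3 Tr R <= 4/3 g^H R g, and 1 - 1/e < 3/4. *)

Lemma big_ord_ltS {V : nmodType} {N : nat} (k : 'I_N) (F : 'I_N -> V) :
  \sum_(i < N | (i < k.+1)%N) F i = F k + \sum_(i < N | (i < k)%N) F i.
Proof.
rewrite (bigD1 k) //=; congr (_ + _); apply: eq_bigl => i.
by rewrite ltnS leq_eqVlt -val_eqE; case: eqP => [->|] /=; rewrite ?ltnn ?andbT.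
Qed.

Lemma normC1_conjM (R : rcfType) (x : R[i]) : `|x| = 1 -> x^* * x = 1.
Proof. by move=> x1; rewrite mulrC -normCK x1 expr1n. Qed.

Lemma ler_mul_of_diag_dominant (F : numFieldType) (c Q T D : F) :
  0 <= c -> 4 * c <= 3 -> 0 <= D -> Q <= T + 2 * D -> 6 * D <= T -> c * Q <= T.
Proof.
move=> c_ge0 c_le D_ge0 QT DT.
have T_ge0 : 0 <= T by apply: le_trans DT; rewrite mulr_ge0 ?ler0n.
have Q3 : 3 * Q <= 4 * T.
  apply: le_trans (_ : 3 * (T + 2 * D) <= _); first by rewrite ler_wpM2l ?ler0n.
  have -> : 4 * T = 3 * T + T by ring.
  by rewrite mulrDr lerD2l mulrA -natrM.
rewrite -(ler_pM2l (_ : 0 < 3)) ?ltr0n //.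
have -> : 3 * (c * Q) = c * (3 * Q) by ring.
apply: le_trans (_ : c * (4 * T) <= _); first by rewrite ler_wpM2l.
by rewrite mulrA [c * 4]mulrC ler_wpM2r.
Qed.

Lemma one_sub_expRN1_le (R : realType) : 4 * (1 - (expR (1 : R))^-1) <= 3.
Proof.
have half_le : 1 - 2^-1 <= expR (- 2^-1 : R) by exact: expR_ge1Dx.
have -> : (expR (1 : R))^-1 = expR (- 2^-1 : R) ^+ 2.
  by rewrite -expRN -expRM_natr mulNr mulVf ?pnatr_eq0.
have : 0 <= expR (- 2^-1 : R) by exact: expR_ge0.
nra.
Qed.

Section QuadraticForm.
Context {R : realType} {N : nat}.
Variable A : 'M[R[i]]_N.

Lemma quadm_full v : quadm N A v = quad A v.
Proof.
rewrite /quadm /quad; apply: eq_big => [i|i _]; first by rewrite ltn_ord.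
by apply: eq_bigl => j; rewrite ltn_ord.
Qed.

Lemma quadmS (k : 'I_N) v : quadm k.+1 A v =
  (v k)^* * A k k * v k + \sum_(j < N | (j < k)%N) (v k)^* * A k j * v j
  + \sum_(i < N | (i < k)%N) (v i)^* * A i k * v k + quadm k A v.
Proof.
rewrite /quadm; under eq_bigr => i _ do rewrite big_ord_ltS.
by rewrite big_ord_ltS big_split /=; ring.
Qed.

Lemma setv_lt (v : 'I_N -> R[i]) (k j : 'I_N) x : (j < k)%N -> setv v k x j = v j.
Proof. by move=> jk; rewrite /setv -val_eqE /= ltn_eqF. Qed.

Lemma setv_at (v : 'I_N -> R[i]) (k : 'I_N) x : setv v k x k = x.
Proof. by rewrite /setv eqxx. Qed.

Lemma quadm_setv v (k : 'I_N) x : quadm k A (setv v k x) = quadm k A v.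
Proof. by apply: eq_bigr => i ik; apply: eq_bigr => j jk; rewrite !setv_lt. Qed.

Lemma quadm_setv_sign v (k : 'I_N) :
  quadm k.+1 A (setv v k 1) + quadm k.+1 A (setv v k (-1)) =
  2 * (quadm k A v + A k k).
Proof.
have row x : \sum_(j < N | (j < k)%N) x^* * A k j * setv v k x j =
    x^* * \sum_(j < N | (j < k)%N) A k j * v j.
  by rewrite big_distrr; apply: eq_bigr => j jk; rewrite setv_lt //= mulrA.
have col x : \sum_(j < N | (j < k)%N) (setv v k x j)^* * A j k * x =
    (\sum_(j < N | (j < k)%N) (v j)^* * A j k) * x.
  by rewrite big_distrl; apply: eq_bigr => j jk; rewrite setv_lt.
rewrite !quadmS !quadm_setv !setv_at !row !col rmorphN1 rmorph1; ring.
Qed.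

Lemma greedy_quadmS {g} (k : 'I_N) : greedy_output A g ->
  quadm k A g + A k k <= quadm k.+1 A g.
Proof.
move=> [g_circ [_ g_max]].
have [k0|k_gt0] := posnP k.
  rewrite quadmS /quadm !big_pred0 => [|j|j|j]; rewrite ?k0 //.
  by rewrite !addr0 add0r mulrAC normC1_conjM ?mul1r ?g_circ.
have circ1 : on_circle (1 : R[i]) by rewrite /on_circle normr1.
have circN1 : on_circle (-1 : R[i]) by rewrite /on_circle normrN normr1.
have := lerD (g_max k k_gt0 _ circ1) (g_max k k_gt0 _ circN1).
by rewrite quadm_setv_sign -mulr2n -(mulr_natl (quadm _ _ _)) ler_pM2l ?ltr0n.
Qed.

Lemma greedy_trace_le {g} : greedy_output A g -> \tr A <= quad A g.
Proof.
move=> g_greedy; rewrite -quadm_full.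
have partial m : (m <= N)%N -> \sum_(i < N | (i < m)%N) A i i <= quadm m A g.
  elim: m => [|m IHm] mN; first by rewrite /quadm !big_pred0.
  rewrite (big_ord_ltS (Ordinal mN)) addrC.
  have := greedy_quadmS (Ordinal mN) g_greedy; apply: le_trans.
  by rewrite lerD2r IHm // ltnW.
rewrite /mxtrace (eq_bigl (fun i : 'I_N => (i < N)%N)) ?partial //.
by move=> i; rewrite ltn_ord.
Qed.

Lemma delta_ge0 k : 0 <= delta A k.
Proof. by apply: sumr_ge0 => i _; exact: normr_ge0. Qed.

(* Since delta vanishes at the first index, every nonzero delta_j occurs in
   the double sum at least once, namely for i = 0. *)
Lemma sum_delta_le_sum_delta_above :
  \sum_i delta A i <= \sum_(i : 'I_N) \sum_(j : 'I_N | (i < j)%N) delta A j.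
Proof.
rewrite [leRHS](exchange_big_dep xpredT) //=; apply: ler_sum => j _.
have [j0|j_gt0] := posnP j.
  have no_lt (i : 'I_N) : (i < j)%N = false by rewrite j0.
  by rewrite /delta !big_pred0.
pose i0 : 'I_N := Ordinal (ltn_trans j_gt0 (ltn_ord j)).
by rewrite (bigD1 i0) //= lerDl sumr_ge0 // => i _; exact: delta_ge0.
Qed.

Lemma mxtrace_Rbar_ge : 6 * \sum_i delta A i <= \tr (Rbar A).
Proof.
have -> : \tr (Rbar A) = \sum_i acoef A i.
  by apply: eq_bigr => i _; rewrite mxE eqxx.
have -> : 6 = 2 + 4 :> R[i] by rewrite -natrD.
rewrite big_split /= -!big_distrr /= mulrDl lerD2l.
by rewrite ler_wpM2l ?ler0n ?sum_delta_le_sum_delta_above.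
Qed.

Hypothesis A_herm : hermitian_mx A.

Lemma quad_real v : quad A v \is Num.real.
Proof.
rewrite CrealE /quad rmorph_sum; under eq_bigr do rewrite rmorph_sum.
rewrite exchange_big; apply/eqP/eq_bigr => i _; apply: eq_bigr => j _.
by rewrite !rmorphM /= conjCK (A_herm i j) conjCK mulrC [v j * _]mulrC mulrA.
Qed.

Lemma mxtrace_real : \tr A \is Num.real.
Proof.
by apply: rpred_sum => i _; rewrite CrealE; apply/eqP; rewrite [RHS]A_herm.
Qed.

Lemma quad_diag_offdiag s : (forall i, on_circle (s i)) ->
  quad A s = \tr A + \sum_i \sum_(j | j != i) (s i)^* * A i j * s j.
Proof.
move=> s_circ; rewrite /quad /mxtrace -big_split; apply: eq_bigr => i _.
by rewrite (bigD1 i) //= mulrAC normC1_conjM ?mul1r ?s_circ.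
Qed.

Lemma sum_offdiag_norm :
  \sum_i \sum_(j | j != i) `|A i j| = 2 * \sum_i delta A i.
Proof.
under eq_bigr => i _ do rewrite (bigID (fun j : 'I_N => (j < i)%N)) /=.
rewrite big_split /= mulr2n mulrDl mul1r; congr (_ + _).
  apply: eq_bigr => i _; apply: eq_bigl => j.
  by rewrite -val_eqE /=; case: ltngtP.
rewrite (exchange_big_dep xpredT) //=; apply: eq_bigr => i _.
apply: eq_big => [j|j _]; first by rewrite -val_eqE /=; case: ltngtP.
by rewrite A_herm normcJ.
Qed.

Lemma quad_le_trace_delta s : (forall i, on_circle (s i)) ->
  quad A s <= \tr A + 2 * \sum_i delta A i.
Proof.
move=> s_circ; have := quad_real s.
rewrite quad_diag_offdiag // lerD2l => quad_s_real.
set X := \sum_i _ in quad_s_real *.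
have X_real : X \is Num.real.
  by rewrite -[X](addKr (\tr A)) rpredD ?rpredN ?mxtrace_real.
apply: le_trans (real_ler_norm X_real) _.
rewrite -sum_offdiag_norm; apply: le_trans (ler_norm_sum _ _ _) _.
apply: ler_sum => i _; apply: le_trans (ler_norm_sum _ _ _) _.
by apply: ler_sum => j _; rewrite !normrM normcJ !s_circ mul1r mulr1.
Qed.

End QuadraticForm.

Theorem theorem1 (R : realType) (N : nat) (A : 'M[R[i]]_N) (g : 'I_N -> R[i]) :
  hermitian_mx A ->
  greedy_output A g ->
  \tr (Rbar A) <= \tr A ->
  forall s : 'I_N -> R[i], (forall i : 'I_N, on_circle (s i)) ->
    ((1 - (expR (1 : R))^-1)%:C) * quad A s <= quad A g.
Proof.
move=> A_herm g_greedy trace_hyp s s_circ.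
apply: (le_trans _ (greedy_trace_le A g_greedy)).
apply: (@ler_mul_of_diag_dominant _ _ _ _ (\sum_i delta A i)).
- by rewrite lecR subr_ge0 -expRN expR_le1 lerN10.
- by move: (one_sub_expRN1_le R); rewrite -lecR rmorphM /= !rmorph_nat.
- by rewrite sumr_ge0 // => i _; exact: delta_ge0.
- exact: quad_le_trace_delta.
- exact: le_trans (mxtrace_Rbar_ge A) trace_hyp.
Qed.
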